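(* Let $w\in\mathbb{R}^J_+\setminus\{0\}$. Then $$\mathscr{P}_1(w)=\sup_{\mu\in\mathbb{M}_1^J,\ \lambda\in\mathbb{L}^M}\Big\{\sum_{i\in\Omega}f_i(\mu_i,\lambda_i,w)-\beta(\mu,w)\ \Big|\ \mathbb{E}[\lambda]=0\Big\},$$ where for $i\in\Omega$, $\mu_i\in\mathbb{R}^J_+$, $\lambda_i\in\mathbb{R}^M$, $$f_i(\mu_i,\lambda_i,w)=\inf_{(x_i,y_i)\in\mathcal{F}_i}\Big(w^{\mathsf T}\big[\mu_i\cdot(Cx_i+Q_iy_i)\big]+p_i\lambda_i^{\mathsf T}x_i\Big).$$
   Context: Probability space: $\Omega=\{1,\dots,I\}$, $I\ge 2$, with probabilities $p_i>0$, $\sum_{i\in\Omega}p_i=1$. For an integer $J\ge1$, $\mathbb{L}^J$ denotes the set of random vectors $u:\Omega\to\mathbb{R}^J$, identified with tuples $(u_1,\dots,u_I)$, $u_i\in\mathbb{R}^J$; $\mathbb{L}^{J\times N}$ denotes random $J\times N$ matrices with realizations $Q_1,\dots,Q_I$; $\mathbb{L}^N_+$ the random vectors with nonnegative components; $\mathbb{E}[u]=\sum_{i}p_iu_i$. $u\le v$ means $u_i^j\le v_i^j$ for all $i,j$. A multivariate convex risk measure is a map $R:\mathbb{L}^J\to 2^{\mathbb{R}^J}$ such that: (A1) $u\le v$ implies $R(u)\supseteq R(v)$; (A2) $R(u+z)=R(u)+z$ for all $z\in\mathbb{R}^J$; (A3) $R(u)\notin\{\emptyset,\mathbb{R}^J\}$;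 (A4) $R(\gamma u+(1-\gamma)v)\supseteq\gamma R(u)+(1-\gamma)R(v)$ for $\gamma\in(0,1)$; (A5) the acceptance set $\mathcal{A}=\{u\in\mathbb{L}^J\mid 0\in R(u)\}$ is closed. $\mathbb{M}_1^J$ denotes the set of $J$-tuples $\mu=(\mu^1,\dots,\mu^J)$ of probability measures on $\Omega$, with $\mu_i=(\mu_i^1,\dots,\mu_i^J)^{\mathsf T}$, and $\mathbb{E}^\mu[u]=\sum_{i\in\Omega}\mu_i\cdot u_i$, where $\cdot$ is the componentwise (Hadamard) product. The minimal penalty function is $\beta(\mu,w)=\sup_{u\in\mathcal{A}}w^{\mathsf T}\mathbb{E}^\mu[u]$ for $\mu\in\mathbb{M}_1^J$, $w\in\mathbb{R}^J_+\setminus\{0\}$; it is known that $\inf_{z\in R(u)}w^{\mathsf T}z=\sup_{\mu\in\mathbb{M}_1^J}(w^{\mathsf T}\mathbb{E}^\mu[u]-\beta(\mu,w))$. Problem data: $A\in\mathbb{R}^{K\times M}$, $b\in\mathbb{R}^K$, $C\in\mathbb{R}^{J\times M}$, random $W\in\mathbb{L}^{L\times N}$, $T\in\mathbb{L}^{L\times M}$, $h\in\mathbb{L}^L$, $Q\in\mathbb{L}^{J\times N}$; $\mathcal{X}=\{(x,y)\in\mathbb{R}^M_+\times\mathbb{L}^N_+\mid Ax=b,\ T_ix+W_iy_i=h_i\ \forall i\in\Omega\}$, assumed nonempty and compact; $Cx+Qy$ has realizations $Cx+Q_iy_i$. For each $i\in\Omega$, $\mathcal{F}_i=\{(x_i,y_i)\in\mathbb{R}^M_+\times\mathbb{R}^N_+\mid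 Ax_i=b,\ T_ix_i+W_iy_i=h_i\}$, assumed nonempty and compact. $\mathscr{P}_1(w)$ is the optimal value of $\min w^{\mathsf T}z$ s.t. $z\in R(Cx+Qy)$, $(x,y)\in\mathcal{X}$, $z\in\mathbb{R}^J$. *)

From Stdlib Require Import Reals ClassicalEpsilon.
From mathcomp Require Import ssreflect ssrfun ssrbool eqtype ssrnat seq fintype bigop.

Set Implicit Arguments.
Unset Strict Implicit.
Local Open Scope R_scope.

Definition rsum (n : nat) (F : 'I_n -> R) : R := \big[Rplus/0%R]_(k < n) F k.

Definition vec (n : nat) := 'I_n -> R.
Definition dot (n : nat) (a b : vec n) : R := rsum (fun k => Rmult (a k) (b k)).
Definition matvec (m n : nat) (A : 'I_m -> 'I_n -> R) (x : vec n) : vec m :=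
  fun r => rsum (fun k => Rmult (A r k) (x k)).

(* random vectors on Omega = 'I_nI : u i is the realization u_i in R^n *)
Definition rvec (nI n : nat) := 'I_nI -> vec n.

Inductive Rbar := Fin (r : R) | PInf | MInf.

Definition Rbar_le (x y : Rbar) : Prop :=
  match x, y with
  | MInf, _ => True
  | _, PInf => True
  | Fin a, Fin b => Rle a b
  | _, _ => False
  end.

Definition is_lub_Rbar (S : Rbar -> Prop) (v : Rbar) : Prop :=
  (forall x, S x -> Rbar_le x v) /\
  (forall b, (forall x, S x -> Rbar_le x b) -> Rbar_le v b).
Definition is_glb_Rbar (S : Rbar -> Prop) (v : Rbar) : Prop :=
  (forall x, S x -> Rbar_le v x) /\
  (forall b, (forall x, S x -> Rbar_le b x) -> Rbar_le b v).

(* supremum / infimum in the extended reals (they always exist and are unique;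
   sup of the empty set is -oo, inf of the empty set is +oo) *)
Definition Rbar_sup (S : Rbar -> Prop) : Rbar := epsilon (inhabits MInf) (is_lub_Rbar S).
Definition Rbar_inf (S : Rbar -> Prop) : Rbar := epsilon (inhabits MInf) (is_glb_Rbar S).

(* arithmetic; the convention for (+oo) + (-oo) is irrelevant here *)
Definition Rbar_plus (x y : Rbar) : Rbar :=
  match x, y with
  | Fin a, Fin b => Fin (a + b)
  | MInf, _ | _, MInf => MInf
  | _, _ => PInf
  end.
Definition Rbar_opp (x : Rbar) : Rbar :=
  match x with Fin a => Fin (- a) | PInf => MInf | MInf => PInf end.
Definition Rbar_minus (x y : Rbar) : Rbar := Rbar_plus x (Rbar_opp y).
Definition Rbar_sum (n : nat) (F : 'I_n -> Rbar) : Rbar :=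
  \big[Rbar_plus/Fin 0%R]_(k < n) F k.

(* R : L^J -> 2^{R^J}, a set of vectors represented as a predicate *)
Definition set_valued (nI J : nat) := rvec nI J -> vec J -> Prop.

Definition is_mcrm (nI J : nat) (Rm : set_valued nI J) : Prop :=
  (* (A1) u <= v implies R(u) contains R(v) *)
  (forall u v : rvec nI J, (forall i j, Rle (u i j) (v i j)) ->
     forall z, Rm v z -> Rm u z) /\
  (* (A2) R(u + z) = R(u) + z *)
  (forall (u : rvec nI J) (z y : vec J),
     Rm (fun i j => u i j + z j) y <-> Rm u (fun j => y j - z j)) /\
  (forall u : rvec nI J, (exists z, Rm u z) /\ (exists z, ~ Rm u z)) /\
  (* (A4) R(g u + (1-g) v) contains g R(u) + (1-g) R(v) *)
  (forall (g : R) (u v : rvec nI J) (a b : vec J), 0 < g < 1 ->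
     Rm u a -> Rm v b ->
     Rm (fun i j => g * u i j + (1 - g) * v i j) (fun j => g * a j + (1 - g) * b j)) /\
  (* (A5) the acceptance set {u | 0 in R(u)} is closed (sequentially, in the
     finite-dimensional space L^J) *)
  (forall (s : nat -> rvec nI J) (u : rvec nI J),
     (forall n, Rm (s n) (fun _ => 0)) ->
     (forall i j, Un_cv (fun n => s n i j) (u i j)) ->
     Rm u (fun _ => 0)).

(* M_1^J : mu i j = mu^j_i, each mu^j a probability measure on Omega *)
Definition in_M1 (nI J : nat) (mu : 'I_nI -> vec J) : Prop :=
  (forall i j, Rle 0 (mu i j)) /\ (forall j, rsum (fun i => mu i j) = 1).

Definition Emu (nI J : nat) (mu : 'I_nI -> vec J) (u : rvec nI J) : vec J :=
  fun j => rsum (fun i => mu i j * u i j).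

Definition beta (nI J : nat) (Rm : set_valued nI J) (mu : 'I_nI -> vec J) (w : vec J) : Rbar :=
  Rbar_sup (fun v => exists u : rvec nI J, Rm u (fun _ => 0) /\ v = Fin (dot w (Emu mu u))).

Definition nonnegv (n : nat) (x : vec n) : Prop := forall k, Rle 0 (x k).

Definition in_X (nI K M N L : nat)
  (A : 'I_K -> 'I_M -> R) (b : vec K)
  (W : 'I_nI -> 'I_L -> 'I_N -> R) (T : 'I_nI -> 'I_L -> 'I_M -> R) (h : rvec nI L)
  (x : vec M) (y : rvec nI N) : Prop :=
  nonnegv x /\ (forall i, nonnegv (y i)) /\ matvec A x = b /\
  (forall i, (fun l => matvec (T i) x l + matvec (W i) (y i) l) = h i).

Definition in_F (nI K M N L : nat)
  (A : 'I_K -> 'I_M -> R) (b : vec K)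
  (W : 'I_nI -> 'I_L -> 'I_N -> R) (T : 'I_nI -> 'I_L -> 'I_M -> R) (h : rvec nI L)
  (i : 'I_nI) (x : vec M) (y : vec N) : Prop :=
  nonnegv x /\ nonnegv y /\ matvec A x = b /\
  (fun l => matvec (T i) x l + matvec (W i) y l) = h i.

Definition outcome (nI J M N : nat) (C : 'I_J -> 'I_M -> R) (Q : 'I_nI -> 'I_J -> 'I_N -> R)
  (x : vec M) (y : rvec nI N) : rvec nI J :=
  fun i j => matvec C x j + matvec (Q i) (y i) j.

Definition P1 (nI J K M N L : nat) (Rm : set_valued nI J)
  (A : 'I_K -> 'I_M -> R) (b : vec K) (C : 'I_J -> 'I_M -> R)
  (W : 'I_nI -> 'I_L -> 'I_N -> R) (T : 'I_nI -> 'I_L -> 'I_M -> R) (h : rvec nI L)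
  (Q : 'I_nI -> 'I_J -> 'I_N -> R) (w : vec J) : Rbar :=
  Rbar_inf (fun v => exists (z : vec J) (x : vec M) (y : rvec nI N),
     Rm (outcome C Q x y) z /\ in_X A b W T h x y /\ v = Fin (dot w z)).

Definition f_i (nI J K M N L : nat) (p : 'I_nI -> R)
  (A : 'I_K -> 'I_M -> R) (b : vec K) (C : 'I_J -> 'I_M -> R)
  (W : 'I_nI -> 'I_L -> 'I_N -> R) (T : 'I_nI -> 'I_L -> 'I_M -> R) (h : rvec nI L)
  (Q : 'I_nI -> 'I_J -> 'I_N -> R) (i : 'I_nI) (mui : vec J) (lami : vec M) (w : vec J) : Rbar :=
  Rbar_inf (fun v => exists (x : vec M) (y : vec N), in_F A b W T h i x y /\
     v = Fin (dot w (fun j => mui j * (matvec C x j + matvec (Q i) y j)) + p i * dot lami x)).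

From Stdlib Require Import Reals Lra Lia.
From Stdlib Require Import Classical ClassicalEpsilon FunctionalExtensionality PropExtensionality.
From HB Require Import structures.
From mathcomp Require Import ssreflect ssrfun ssrbool eqtype ssrnat seq fintype bigop.

Set Implicit Arguments.
Unset Strict Implicit.
Local Open Scope R_scope.

(* Weak duality: for feasible [(z, x, y)] and multipliers [(mu, lam)] with [E[lam] = 0], the
   dual objective is at most the Lagrangian at [(x, y, Cx + Qy - z)], which equals [w^T z].
   Strong duality: if [c + g] bounds [P1] from below with [g > 0], the residuals of the
   problem with nonanticipativity relaxed (violations of the risk constraint, of [x_i = x]
   and of the objective bound [c]) form a convex set at positive distance from the origin,
   by compactness of the scenario sets and monotonicity of [R]. The nearest point of its
   closure is a separating functional [(V, eta, sigma)]; its recession directions force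
   [sigma > 0], [V >= 0], [sum_i eta_i = 0] and [sum_i V_ij = sigma w_j], and then
   [mu = V / (sigma w)], [lam = eta / (sigma p)] have dual value at least [c]. *)

(** * Finite sums *)

HB.instance Definition _ := Monoid.isComLaw.Build R 0 Rplus
  (fun x y z => esym (Rplus_assoc x y z)) Rplus_comm Rplus_0_l.

Definition fsum (I : finType) (F : I -> R) : R := \big[Rplus/0]_(k : I) F k.

Lemma rsum_fsum n (F : 'I_n -> R) : rsum F = fsum F.
Proof. by []. Qed.

Section FiniteSums.
Variable I : finType.
Implicit Types F G : I -> R.

Lemma eq_fsum F G : (forall k, F k = G k) -> fsum F = fsum G.
Proof. by move=> FG; apply: eq_bigr => k _. Qed.

Lemma fsumD F G : fsum (fun k => F k + G k) = fsum F + fsum G.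
Proof. exact: big_split. Qed.

Lemma fsumZ c F : fsum (fun k => c * F k) = c * fsum F.
Proof. by apply/esym/(big_morph (fun x => c * x)) => [x y|]; ring. Qed.

Lemma fsumZr c F : fsum (fun k => F k * c) = fsum F * c.
Proof. by rewrite Rmult_comm -fsumZ; apply: eq_fsum => k; ring. Qed.

Lemma fsumN F : fsum (fun k => - F k) = - fsum F.
Proof. by apply/esym/(big_morph Ropp) => [x y|]; ring. Qed.

Lemma fsumB F G : fsum (fun k => F k - G k) = fsum F - fsum G.
Proof. by rewrite /Rminus fsumD fsumN. Qed.

Lemma fsum0 : fsum (fun _ : I => 0) = 0.
Proof. exact: big1_eq. Qed.

Lemma fsum_mul0 F : fsum (fun k => F k * 0) = 0.
Proof. by rewrite fsumZr Rmult_0_r. Qed.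

Lemma ler_fsum F G : (forall k, F k <= G k) -> fsum F <= fsum G.
Proof. by move=> FG; apply: (big_ind2 Rle) => // *; lra. Qed.

Lemma fsum_ge0 F : (forall k, 0 <= F k) -> 0 <= fsum F.
Proof. by move=> F0; apply: (big_ind (Rle 0)) => // *; lra. Qed.

Lemma fsumD1 F j : fsum F = F j + \big[Rplus/0]_(k | k != j) F k.
Proof. exact: bigD1. Qed.

Lemma ler_fsum_term F j : (forall k, 0 <= F k) -> F j <= fsum F.
Proof.
move=> F0; rewrite (fsumD1 F j).
have : 0 <= \big[Rplus/0]_(k | k != j) F k by apply: (big_ind (Rle 0)) => // *; lra.
lra.
Qed.

Lemma fsum_eq0_nonneg F j : (forall k, 0 <= F k) -> fsum F = 0 -> F j = 0.
Proof.
move=> F0 Fsum; apply: Rle_antisym; last exact: F0.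
by rewrite -Fsum; apply: ler_fsum_term.
Qed.

Lemma fsum_update F j v :
  fsum (fun k => if k == j then v else F k) = fsum F - F j + v.
Proof.
rewrite (fsumD1 _ j) (fsumD1 F j) eqxx.
rewrite (eq_bigr F) => [|k /negbTE -> //]; ring.
Qed.

Lemma fsum_delta F j c : fsum (fun k => F k * (if k == j then c else 0)) = F j * c.
Proof.
rewrite (fsumD1 _ j) eqxx big1 ?Rplus_0_r // => k /negbTE ->; ring.
Qed.

End FiniteSums.

Lemma fsum_sum (I1 I2 : finType) (F : I1 + I2 -> R) :
  fsum F = fsum (fun k => F (inl k)) + fsum (fun k => F (inr k)).
Proof. exact: big_sumType. Qed.

Lemma fsum_ord1 (F : 'I_1 -> R) : fsum F = F ord0.
Proof. exact: big_ord1. Qed.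

Lemma fsum_pair (I1 I2 : finType) (F : I1 * I2 -> R) :
  fsum F = fsum (fun i => fsum (fun j => F (i, j))).
Proof. by rewrite /fsum pair_big; apply: eq_bigr => -[]. Qed.

Lemma fsum_exch (I1 I2 : finType) (F : I1 -> I2 -> R) :
  fsum (fun i => fsum (fun j => F i j)) = fsum (fun j => fsum (fun i => F i j)).
Proof. exact: exchange_big. Qed.

Lemma fsum_pair_snd (I1 I2 : finType) (F : I1 * I2 -> R) (G : I2 -> R) :
  fsum (fun ij => F ij * G ij.2) = fsum (fun j => fsum (fun i => F (i, j)) * G j).
Proof. by rewrite fsum_pair fsum_exch; apply: eq_fsum => j /=; rewrite fsumZr. Qed.

Lemma dot_zero n (u : vec n) : dot u (fun _ => 0) = 0.
Proof. exact: fsum_mul0. Qed.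

Lemma dot_add_scal n (u x d : vec n) t :
  dot u (fun k => x k + t * d k) = dot u x + t * dot u d.
Proof. by rewrite /dot !rsum_fsum -fsumZ -fsumD; apply: eq_fsum => k; ring. Qed.

Lemma dot_comb n (u x1 x2 : vec n) s t :
  dot u (fun k => s * x1 k + t * x2 k) = s * dot u x1 + t * dot u x2.
Proof. by rewrite /dot !rsum_fsum -!fsumZ -fsumD; apply: eq_fsum => k; ring. Qed.

Lemma matvec_comb m n (B : 'I_m -> 'I_n -> R) (x1 x2 : vec n) s t r :
  matvec B (fun k => s * x1 k + t * x2 k) r = s * matvec B x1 r + t * matvec B x2 r.
Proof. by rewrite /matvec !rsum_fsum -!fsumZ -fsumD; apply: eq_fsum => k; ring. Qed.

(** * Extended reals *)

Lemma Rbar_le_trans x y z : Rbar_le x y -> Rbar_le y z -> Rbar_le x z.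
Proof. by case: x; case: y; case: z => //= *; lra. Qed.

Lemma Rbar_le_antisym x y : Rbar_le x y -> Rbar_le y x -> x = y.
Proof. by case: x; case: y => //= a b *; f_equal; lra. Qed.

Lemma Rbar_le_opp x y : Rbar_le (Rbar_opp x) (Rbar_opp y) <-> Rbar_le y x.
Proof. by case: x; case: y => //= *; split; lra. Qed.

Lemma Rbar_oppK x : Rbar_opp (Rbar_opp x) = x.
Proof. by case: x => //= r; rewrite Ropp_involutive. Qed.

Lemma Rbar_lub_exists (S : Rbar -> Prop) : exists v, is_lub_Rbar S v.
Proof.
case: (classic (S PInf)) => [SP|nSP].
  by exists PInf; split=> [[]|b /(_ _ SP)] //; case: b.
case: (classic (exists r, S (Fin r))) => [[r0 Sr0]|nSF]; last first.
  exists MInf; split=> [[r Sr| |]|[]] //; by [case: nSF; exists r].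
case: (classic (bound (fun r => S (Fin r)))) => [Sbd|nSbd].
  have [m [m_ub m_least]] := completeness _ Sbd (ex_intro _ r0 Sr0).
  exists (Fin m); split=> [[r Sr| |]|[b' Hb'| |Hb']] //=.
  - exact: m_ub.
  - by apply: m_least => r Sr; exact: (Hb' (Fin r) Sr).
  - exact: Hb' _ Sr0.
exists PInf; split=> [[]|[b' Hb'| |Hb']] //.
- by case: nSbd; exists b' => r Sr; exact: (Hb' (Fin r) Sr).
- exact: Hb' _ Sr0.
Qed.

Lemma Rbar_glb_exists (S : Rbar -> Prop) : exists v, is_glb_Rbar S v.
Proof.
have [v [v_ub v_least]] := Rbar_lub_exists (fun x => S (Rbar_opp x)).
exists (Rbar_opp v); split.
- move=> x Sx; rewrite -[x]Rbar_oppK; apply/Rbar_le_opp/v_ub.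
  by rewrite Rbar_oppK.
- move=> b Hb; rewrite -[b]Rbar_oppK; apply/Rbar_le_opp/v_least => x Sx.
  by rewrite -[x]Rbar_oppK; apply/Rbar_le_opp/Hb.
Qed.

Lemma Rbar_sup_lub S : is_lub_Rbar S (Rbar_sup S).
Proof. exact: epsilon_spec (Rbar_lub_exists S). Qed.

Lemma Rbar_inf_glb S : is_glb_Rbar S (Rbar_inf S).
Proof. exact: epsilon_spec (Rbar_glb_exists S). Qed.

Definition Rbar_of (S : R -> Prop) : Rbar -> Prop := fun t => exists v, S v /\ t = Fin v.

Lemma Rbar_inf_of_bounded (S : R -> Prop) m :
  (exists v, S v) -> (forall v, S v -> m <= v) ->
  exists phi, Rbar_inf (Rbar_of S) = Fin phi /\ (forall v, S v -> phi <= v) /\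
    (forall e, 0 < e -> exists v, S v /\ v < phi + e).
Proof.
move=> [v0 Sv0] Sm; have [inf_lb inf_greatest] := Rbar_inf_glb (Rbar_of S).
have inf_le : Rbar_le (Rbar_inf (Rbar_of S)) (Fin v0) by apply: inf_lb; exists v0.
have inf_ge : Rbar_le (Fin m) (Rbar_inf (Rbar_of S)).
  by apply: inf_greatest => _ [v [Sv ->]]; apply: Sm.
move: inf_lb inf_greatest inf_le inf_ge; case: (Rbar_inf _) => // phi inf_lb inf_greatest _ _.
exists phi; split=> //; split=> [v Sv|e e0]; first by apply: (inf_lb (Fin v)); exists v.
apply: NNPP => nS; suff : Rbar_le (Fin (phi + e)) (Fin phi) by rewrite /=; lra.
apply: inf_greatest => _ [v [Sv ->]] /=.
by apply: Rnot_lt_le => lt_v; apply: nS; exists v.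
Qed.

Lemma Rbar_sup_of_bounded (S : R -> Prop) m :
  (exists v, S v) -> (forall v, S v -> v <= m) ->
  exists phi, Rbar_sup (Rbar_of S) = Fin phi /\ (forall v, S v -> v <= phi) /\
    (forall e, 0 < e -> exists v, S v /\ phi - e < v).
Proof.
move=> [v0 Sv0] Sm; have [sup_ub sup_least] := Rbar_sup_lub (Rbar_of S).
have sup_ge : Rbar_le (Fin v0) (Rbar_sup (Rbar_of S)) by apply: sup_ub; exists v0.
have sup_le : Rbar_le (Rbar_sup (Rbar_of S)) (Fin m).
  by apply: sup_least => _ [v [Sv ->]]; apply: Sm.
move: sup_ub sup_least sup_ge sup_le; case: (Rbar_sup _) => // phi sup_ub sup_least _ _.
exists phi; split=> //; split=> [v Sv|e e0]; first by apply: (sup_ub (Fin v)); exists v.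
apply: NNPP => nS; suff : Rbar_le (Fin phi) (Fin (phi - e)) by rewrite /=; lra.
apply: sup_least => _ [v [Sv ->]] /=.
by apply: Rnot_lt_le => lt_v; apply: nS; exists v.
Qed.

Lemma Rbar_sum_Fin n (F : 'I_n -> R) : Rbar_sum (fun i => Fin (F i)) = Fin (fsum F).
Proof. by apply/esym/(big_morph Fin). Qed.

Lemma Rbar_sum_le n (F : 'I_n -> Rbar) (G : 'I_n -> R) :
  (forall i, Rbar_le (F i) (Fin (G i))) -> Rbar_le (Rbar_sum F) (Fin (fsum G)).
Proof.
move=> FG; apply: (big_ind2 (fun a x => Rbar_le a (Fin x))) => [|a x b y|i _].
- by rewrite /=; lra.
- by case: a => [a| |]; case: b => [b| |] //= *; lra.
- exact: FG.
Qed.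

Lemma Rbar_minus_le x y a b :
  Rbar_le x (Fin a) -> Rbar_le (Fin b) y -> Rbar_le (Rbar_minus x y) (Fin (a - b)).
Proof. by case: x => [x| |]; case: y => [y| |] //=; lra. Qed.

Lemma Rbar_le_sum_inf_sub_sup n (G : 'I_n -> R -> Prop) (B : R -> Prop) c :
  (forall i, exists v, G i v) -> (exists v, B v) ->
  (forall (g : 'I_n -> R) bb, (forall i, G i (g i)) -> B bb -> c <= fsum g - bb) ->
  Rbar_le (Fin c)
    (Rbar_minus (Rbar_sum (fun i => Rbar_inf (Rbar_of (G i)))) (Rbar_sup (Rbar_of B))).
Proof.
move=> Gne [b0 Bb0] Hc; have [g0 Gg0] := choice _ Gne.
have [sB [-> [_ sB_approx]]] : exists sB, Rbar_sup (Rbar_of B) = Fin sB /\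
    (forall v, B v -> v <= sB) /\ (forall e, 0 < e -> exists v, B v /\ sB - e < v).
  apply: (Rbar_sup_of_bounded (m := fsum g0 - c)); first by exists b0.
  by move=> bb Bb; have := Hc _ _ Gg0 Bb; lra.
have infG : forall i, exists phi, Rbar_inf (Rbar_of (G i)) = Fin phi /\
    (forall e, 0 < e -> exists v, G i v /\ v < phi + e).
  move=> i; have Glow : forall v, G i v -> c + b0 - (fsum g0 - g0 i) <= v.
    move=> v Gv; have Gsel : forall k, G k (if k == i then v else g0 k).
      by move=> k; case: eqP => [->|_] /=; [exact: Gv | exact: Gg0].
    by have := Hc _ _ Gsel Bb0; rewrite fsum_update; lra.
  have [phi [Ephi [_ approx]]] := Rbar_inf_of_bounded (ex_intro _ _ (Gg0 i)) Glow.
  by exists phi.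
have [phi Ephi] := choice _ infG.
have -> : (fun i => Rbar_inf (Rbar_of (G i))) = (fun i => Fin (phi i)).
  by apply: functional_extensionality => i; case: (Ephi i).
rewrite Rbar_sum_Fin /=; apply: Rle_plus_epsilon => e e0.
pose kap := fsum (fun _ : 'I_n => 1).
have kap0 : 0 <= kap by apply: fsum_ge0 => _; lra.
pose e' := e / (kap + 1).
have e'0 : 0 < e' by apply: Rdiv_lt_0_compat; lra.
have [g Hg] := choice _ (fun i => (Ephi i).2 e' e'0).
have [bb [Bb bb_gt]] := sB_approx e' e'0.
have := Hc g bb (fun i => (Hg i).1) Bb.
have : fsum g <= fsum phi + e' * kap.
  by rewrite /kap -fsumZ -fsumD; apply: ler_fsum => i; have := (Hg i).2; lra.
have : e' * kap + e' = e by rewrite /e'; field; lra.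
lra.
Qed.

Lemma Rbar_glb_le (SL : Rbar -> Prop) L X : is_glb_Rbar SL L ->
  (forall c g, 0 < g -> (forall y, SL y -> Rbar_le (Fin (c + g)) y) -> Rbar_le (Fin c) X) ->
  Rbar_le L X.
Proof.
case=> L_lb _ H; case: L L_lb => [l| |] L_lb //.
- have HX : forall g, 0 < g -> Rbar_le (Fin (l - g)) X.
    move=> g g0; apply: (H _ g g0) => y Sy.
    by rewrite (_ : l - g + g = l); [apply: L_lb | ring].
  case: X {H} HX => [x| |] HX //=; last by have := HX 1; rewrite /=; lra.
  apply: Rle_plus_epsilon => e e0; have := HX e e0; rewrite /=; lra.
- have HX : forall c, Rbar_le (Fin c) X.
    by move=> c; apply: (H c 1) => [|y /L_lb]; [lra | case: y].
  by case: X {H} HX => [x| |] HX //=; [have := HX (x + 1) | have := HX 0]; rewrite /=; lra.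
Qed.

(** * Sequences *)

Definition incr_index (phi : nat -> nat) := forall m, (phi m < phi (S m))%coq_nat.

Lemma incr_index_ge phi : incr_index phi -> forall m, (m <= phi m)%coq_nat.
Proof. by move=> Hphi; elim=> [|m IH]; [lia | have := Hphi m; lia]. Qed.

Lemma incr_index_comp phi psi :
  incr_index phi -> incr_index psi -> incr_index (fun m => phi (psi m)).
Proof.
move=> Hphi Hpsi m; have := Hpsi m; move: (psi m) (psi (S m)) => a b.
elim: b => [|b IH] Hab; first lia.
have := Hphi b; case: (Nat.eq_dec a b) => [->|neq] //; have := IH ltac:(lia); lia.
Qed.

Lemma cv_const c : Un_cv (fun _ => c) c.
Proof. by move=> e e0; exists 0%nat => n _; rewrite /R_dist Rminus_diag Rabs_R0. Qed.

Lemma cv_scal (u : nat -> R) l c : Un_cv u l -> Un_cv (fun n => c * u n) (c * l).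
Proof. exact: CV_mult (cv_const c). Qed.

Lemma cv_subseq (u : nat -> R) l phi : incr_index phi -> Un_cv u l -> Un_cv (fun m => u (phi m)) l.
Proof.
move=> Hphi Hu e e0; have [N HN] := Hu e e0; exists N => n Hn; apply: HN.
have := incr_index_ge Hphi n; rewrite /ge in Hn *; lia.
Qed.

Lemma fsum_cv (I : finType) (F : nat -> I -> R) (G : I -> R) :
  (forall k, Un_cv (fun n => F n k) (G k)) -> Un_cv (fun n => fsum (F n)) (fsum G).
Proof.
move=> HF; rewrite /fsum; elim: (index_enum I) => [|k r IH].
  by rewrite big_nil; apply: (Un_cv_ext (fun _ => 0)) (cv_const 0) => n; rewrite big_nil.
rewrite big_cons; apply: (Un_cv_ext (fun n => F n k + \big[Rplus/0]_(j <- r) F n j)).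
  by move=> n; rewrite big_cons.
exact: CV_plus.
Qed.

Lemma matvec_cv m n (B : 'I_m -> 'I_n -> R) (xs : nat -> vec n) x r :
  (forall k, Un_cv (fun j => xs j k) (x k)) -> Un_cv (fun j => matvec B (xs j) r) (matvec B x r).
Proof. by move=> Hx; apply: fsum_cv => k; apply: cv_scal. Qed.

Lemma RinvN_le1 n : RinvN n <= 1.
Proof. rewrite /= -Rinv_1; apply: Rinv_le_contravar; [lra | have := pos_INR n; lra]. Qed.

Lemma cv0_of_sq_lt_RinvN (u : nat -> R) : (forall n, u n * u n < RinvN n) -> Un_cv u 0.
Proof.
move=> Hu e e0; have e2 : e * e > 0 by nra.
have [N HN] := RinvN_cv e2.
exists N => n Hn; have := HN n Hn; have := Hu n; rewrite /R_dist !Rminus_0_r.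
rewrite [Rabs (RinvN n)]Rabs_right => [lt_u lt_R|]; last by left; exact: RinvN_pos.
rewrite -[e in _ < e]Rabs_right; last lra.
by apply: Rsqr_lt_abs_0; rewrite /Rsqr; lra.
Qed.

Lemma cv0_uniform_bound (I : finType) (u : nat -> I -> R) :
  (forall k, Un_cv (fun n => u n k) 0) ->
  exists delta : nat -> R, Un_cv delta 0 /\ forall n k, u n k <= delta n.
Proof.
move=> Hu; exists (fun n => fsum (fun k => Rabs (u n k))); split=> [|n k].
  suff : Un_cv (fun n => fsum (fun k => Rabs (u n k))) (fsum (fun _ : I => Rabs 0)).
    by rewrite Rabs_R0 fsum0.
  by apply: fsum_cv => k; apply: cv_cvabs.
apply: Rle_trans (Rle_abs _) _.
by apply: (ler_fsum_term (F := fun k => Rabs (u n k))) => ?; apply: Rabs_pos.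
Qed.

Lemma bounded_cv_subseq (u : nat -> R) B : (forall n, Rabs (u n) <= B) ->
  exists phi l, incr_index phi /\ Un_cv (fun m => u (phi m)) l.
Proof.
move=> HB; have [l Hl] : exists l, ValAdh u l.
  apply: (@Bolzano_Weierstrass u (fun c => - B <= c <= B)); first exact: compact_P3.
  by move=> n; have := HB n; have := Rle_abs (u n); have := Rle_abs (- u n); rewrite Rabs_Ropp; lra.
have Hnear : forall k m, exists n, (k <= n)%coq_nat /\ Rabs (u n - l) < RinvN m.
  by move=> k m; apply: (Hl (disc l (RinvN m))); exists (RinvN m).
have [sel Hsel] := choice _ (fun k => choice _ (Hnear k)).
pose fix phi m := if m is S m' then sel (S (phi m')) m else sel 0%nat 0%nat.
have Hphi : forall m, Rabs (u (phi m) - l) < RinvN m by case=> [|m]; apply: (Hsel _ _).2.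
exists phi, l; split=> [m|e e0]; first by have := (Hsel (S (phi m)) (S m)).1.
have [N HN] := RinvN_cv e0; exists N => n Hn; apply: Rlt_trans (Hphi n) _.
by have := HN n Hn; rewrite /R_dist Rminus_0_r Rabs_right //; left; exact: RinvN_pos.
Qed.

Lemma bounded_fam_cv_subseq (I : finType) (u : nat -> I -> R) B :
  (forall n k, Rabs (u n k) <= B) ->
  exists phi (l : I -> R), incr_index phi /\ forall k, Un_cv (fun m => u (phi m) k) (l k).
Proof.
move=> HB; suff [phi [l [Hphi Hcv]]] : exists phi (l : I -> R), incr_index phi /\
    forall k, k \in enum I -> Un_cv (fun m => u (phi m) k) (l k).
  by exists phi, l; split=> // k; apply: Hcv; rewrite mem_enum.
elim: (enum I) => [|k0 s [phi [l [Hphi Hcv]]]].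
  by exists id, (fun _ => 0); split=> // m /=; lia.
have [psi [l0 [Hpsi Hcv0]]] := bounded_cv_subseq (fun m => HB (phi m) k0).
exists (fun m => phi (psi m)), (fun k => if k == k0 then l0 else l k).
split=> [|k]; first exact: incr_index_comp.
rewrite in_cons; case: eqP => [-> _ //|_ /= ks].
exact: (cv_subseq (u := fun m => u (phi m) k)) (Hcv k ks).
Qed.

(** * Separation from a convex set *)

Definition sqnorm (I : finType) (s : I -> R) := fsum (fun k => s k * s k).

Definition convex_set (I : finType) (S : (I -> R) -> Prop) :=
  forall s1 s2 t, S s1 -> S s2 -> 0 < t < 1 -> S (fun k => t * s1 k + (1 - t) * s2 k).

Lemma sqnorm_ge0 (I : finType) (s : I -> R) : 0 <= sqnorm s.
Proof. by apply: fsum_ge0 => k; apply: Rle_0_sqr. Qed.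

Lemma sqnorm_ge_sq (I : finType) (s : I -> R) k : s k * s k <= sqnorm s.
Proof. by apply: (ler_fsum_term (F := fun k => s k * s k) k) => j; apply: Rle_0_sqr. Qed.

Lemma abs_le_sqnorm (I : finType) (s : I -> R) k : Rabs (s k) <= 1 + sqnorm s.
Proof.
have := sqnorm_ge_sq s k; have : Rabs (s k) <= 1 + s k * s k.
  by rewrite /Rabs; case: Rcase_abs => _; nra.
lra.
Qed.

Lemma quadratic_slope_nonneg D Y : 0 <= Y ->
  (forall t, 0 < t < 1 -> 0 <= 2 * t * D + t * t * Y) -> 0 <= D.
Proof.
move=> Y0 H; apply: Rnot_lt_le => D0.
pose t := Rmin (1/2) (- D / (Y + 1)).
have t0 : 0 < t by apply: Rmin_pos; [lra | apply: Rdiv_lt_0_compat; lra].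
have t1 : t <= 1/2 := Rmin_l _ _.
have tY : t * (Y + 1) <= - D.
  have := Rmult_le_compat_r (Y + 1) _ _ ltac:(lra) (Rmin_r (1/2) (- D / (Y + 1))).
  by rewrite -/t /Rdiv Rmult_assoc Rinv_l; lra.
have := H t ltac:(lra); nra.
Qed.

(* A nearest point [q] to the origin in the closure of [S]: no point of the
   segment from [q] into [S] is shorter. *)
Lemma min_norm_cluster (I : finType) (S : (I -> R) -> Prop) r :
  convex_set S -> (exists s, S s) -> (forall s, S s -> r <= sqnorm s) ->
  exists q, r <= sqnorm q /\ forall y t, S y -> 0 < t < 1 ->
    sqnorm q <= sqnorm (fun k => t * y k + (1 - t) * q k).
Proof.
move=> Sconv [s0 Ss0] Sr.
have Slow : forall x, (exists s, S s /\ x = sqnorm s) -> r <= x by move=> _ [s [Ss ->]]; apply: Sr.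
have [d [_ [d_lb d_approx]]] :=
  Rbar_inf_of_bounded (ex_intro _ _ (ex_intro _ s0 (conj Ss0 erefl))) Slow.
have [sn Hsn] : exists sn : nat -> I -> R, forall n, S (sn n) /\ sqnorm (sn n) < d + RinvN n.
  apply: (choice (fun n s => S s /\ sqnorm s < d + RinvN n)) => n.
  have [_ [[s [Ss ->]] lt_s]] := d_approx _ (RinvN_pos n).
  by exists s.
have Hbd : forall n k, Rabs (sn n k) <= 2 + d.
  by move=> n k; have := abs_le_sqnorm (sn n) k; have := (Hsn n).2; have := RinvN_le1 n; lra.
have [phi [q [Hphi Hcv]]] := bounded_fam_cv_subseq Hbd.
have Hq : Un_cv (fun n => sqnorm (sn (phi n))) (sqnorm q).
  by apply: fsum_cv => k; apply: CV_mult; apply: Hcv.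
exists q; split=> [|y t Sy t01].
  apply: (Rle_cv_lim _ (cv_const r) Hq) => n.
  exact: Sr (Hsn _).1.
have q_le_d : sqnorm q <= d.
  apply: (Rle_cv_lim (Vn := fun n => d + RinvN (phi n)) _ Hq) => [n|].
    exact: Rlt_le (Hsn _).2.
  rewrite -[d in Un_cv _ d]Rplus_0_r; apply: CV_plus; first exact: cv_const.
  exact: (cv_subseq (u := fun n => RinvN n)) RinvN_cv.
apply: Rle_trans q_le_d _.
apply: (Rle_cv_lim _ (cv_const d)) => [n|].
  apply: d_lb; exists (fun k => t * y k + (1 - t) * sn (phi n) k); split=> //.
  by apply: Sconv => //; exact: (Hsn _).1.
apply: fsum_cv => k.
have Hk : Un_cv (fun n => t * y k + (1 - t) * sn (phi n) k) (t * y k + (1 - t) * q k).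
  by apply: CV_plus; [exact: cv_const | apply: cv_scal; apply: Hcv].
exact: CV_mult.
Qed.

Lemma sqnorm_variational (I : finType) (q y : I -> R) :
  (forall t, 0 < t < 1 -> sqnorm q <= sqnorm (fun k => t * y k + (1 - t) * q k)) ->
  sqnorm q <= fsum (fun k => q k * y k).
Proof.
move=> Hq; pose D := fsum (fun k => q k * (y k - q k)).
have D0 : 0 <= D.
  apply: (quadratic_slope_nonneg (Y := sqnorm (fun k => y k - q k))) => [|t t01].
    exact: sqnorm_ge0.
  have := Hq t t01.
  have -> : sqnorm (fun k => t * y k + (1 - t) * q k) =
      sqnorm q + (2 * t * D + t * t * sqnorm (fun k => y k - q k)).
    by rewrite /sqnorm /D -!fsumZ -!fsumD; apply: eq_fsum => k; ring.
  lra.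
have -> : fsum (fun k => q k * y k) = sqnorm q + D.
  by rewrite /sqnorm /D -fsumD; apply: eq_fsum => k; ring.
lra.
Qed.

Lemma convex_separation (I : finType) (S : (I -> R) -> Prop) r :
  convex_set S -> (exists s, S s) -> (forall s, S s -> r <= sqnorm s) ->
  exists v, forall s, S s -> r <= fsum (fun k => v k * s k).
Proof.
move=> Sconv Sne Sr; have [q [r_le_q q_min]] := min_norm_cluster Sconv Sne Sr.
exists q => s Ss; apply: Rle_trans r_le_q _.
by apply: sqnorm_variational => t t01; apply: q_min.
Qed.

Lemma affine_lower_bound a b r : (forall t, 0 <= t -> r <= a + t * b) -> 0 <= b.
Proof.
move=> H; apply: Rnot_lt_le => b0.
pose t := (Rabs a + Rabs r + 1) / (- b).
have t0 : 0 <= t.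
  apply: Rmult_le_pos; first by have := Rabs_pos a; have := Rabs_pos r; lra.
  by left; apply: Rinv_0_lt_compat; lra.
have := H t t0; rewrite (_ : t * b = - (Rabs a + Rabs r + 1)); last by rewrite /t; field; lra.
by have := Rle_abs a; have := Rle_abs (- r); rewrite Rabs_Ropp; lra.
Qed.

Lemma ray_nonneg (I : finType) (S : (I -> R) -> Prop) (v s0 d : I -> R) r :
  (forall s, S s -> r <= fsum (fun k => v k * s k)) ->
  (forall t, 0 <= t -> S (fun k => s0 k + t * d k)) ->
  0 <= fsum (fun k => v k * d k).
Proof.
move=> Hsep Hray; apply: (affine_lower_bound (a := fsum (fun k => v k * s0 k)) (r := r)) => t t0.
rewrite -fsumZ -fsumD (eq_fsum (G := fun k => v k * (s0 k + t * d k))) => [|k]; last by ring.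
exact: Hsep (Hray t t0).
Qed.

(** * The two-stage problem *)

Section TwoStage.
Variables (nI J K M N L : nat) (p : 'I_nI -> R) (Rm : set_valued nI J).
Variables (A : 'I_K -> 'I_M -> R) (b : vec K) (C : 'I_J -> 'I_M -> R)
  (W : 'I_nI -> 'I_L -> 'I_N -> R) (T : 'I_nI -> 'I_L -> 'I_M -> R) (h : rvec nI L)
  (Q : 'I_nI -> 'I_J -> 'I_N -> R) (w : vec J).
Hypotheses (HRm : is_mcrm Rm) (HI : (2 <= nI)%nat)
  (Hp : forall i, 0 < p i) (Hp1 : rsum p = 1) (Hw0 : nonnegv w)
  (HXne : exists x y, in_X A b W T h x y) (HFne : forall i, exists x y, in_F A b W T h i x y)
  (HFbd : forall i, exists B : R, forall x y, in_F A b W T h i x y ->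
     (forall k, Rabs (x k) <= B) /\ (forall k, Rabs (y k) <= B)).

Definition accepted (u : rvec nI J) := Rm u (fun _ => 0).

Lemma accepted_mono u v : (forall i j, u i j <= v i j) -> accepted v -> accepted u.
Proof. by case: HRm => mono _ uv; apply: (mono u v uv). Qed.

Lemma risk_accepted u z : Rm u z <-> accepted (fun i j => u i j - z j).
Proof.
have [_ [transl _]] := HRm; have := transl (fun i j => u i j - z j) z z.
have -> : (fun i j => u i j - z j + z j) = u.
  by apply: functional_extensionality => i; apply: functional_extensionality => j; ring.
by have -> : (fun j => z j - z j) = (fun _ => 0) by apply: functional_extensionality => j; ring.
Qed.

Lemma accepted_exists : exists a, accepted a.
Proof.
have [_ [_ [nontriv _]]] := HRm; have [[z Hz] _] := nontriv (fun _ _ => 0).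
by exists (fun i j => 0 - z j); apply/(risk_accepted (fun _ _ => 0) z).
Qed.

Lemma accepted_convex a1 a2 t : 0 < t < 1 -> accepted a1 -> accepted a2 ->
  accepted (fun i j => t * a1 i j + (1 - t) * a2 i j).
Proof.
move=> t01 Ha1 Ha2; have [_ [_ [_ [conv _]]]] := HRm; have := conv t a1 a2 _ _ t01 Ha1 Ha2.
have -> // : (fun _ : 'I_J => t * 0 + (1 - t) * 0) = (fun _ => 0).
by apply: functional_extensionality => j; ring.
Qed.

(* First-stage decisions [x i] may depend on the scenario: nonanticipativity is relaxed. *)
Definition scen_outcome (x : 'I_nI -> vec M) (y : 'I_nI -> vec N) : rvec nI J :=
  fun i j => matvec C (x i) j + matvec (Q i) (y i) j.

Definition scen_feasible (x : 'I_nI -> vec M) (y : 'I_nI -> vec N) :=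
  forall i, in_F A b W T h i (x i) (y i).

Lemma in_X_scen_feasible x y : in_X A b W T h x y -> scen_feasible (fun _ => x) y.
Proof. by case=> x0 [y0 [Ax TW]] i. Qed.

Lemma in_F_convex i x1 y1 x2 y2 t : 0 < t < 1 ->
  in_F A b W T h i x1 y1 -> in_F A b W T h i x2 y2 ->
  in_F A b W T h i (fun k => t * x1 k + (1 - t) * x2 k) (fun k => t * y1 k + (1 - t) * y2 k).
Proof.
move=> t01 [x10 [y10 [Ax1 TW1]]] [x20 [y20 [Ax2 TW2]]]; split; [|split; [|split]].
- by move=> k; have := x10 k; have := x20 k; nra.
- by move=> k; have := y10 k; have := y20 k; nra.
- by apply: functional_extensionality => r; rewrite matvec_comb Ax1 Ax2; ring.
- apply: functional_extensionality => l; rewrite !matvec_comb.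
  have := f_equal (fun f => f l) TW1; have := f_equal (fun f => f l) TW2; rewrite /= => E2 E1.
  transitivity (t * (matvec (T i) x1 l + matvec (W i) y1 l) +
    (1 - t) * (matvec (T i) x2 l + matvec (W i) y2 l)); first ring.
  by rewrite E1 E2; ring.
Qed.

Lemma in_F_closed i (xn : nat -> vec M) (yn : nat -> vec N) x y :
  (forall n, in_F A b W T h i (xn n) (yn n)) ->
  (forall k, Un_cv (fun n => xn n k) (x k)) -> (forall k, Un_cv (fun n => yn n k) (y k)) ->
  in_F A b W T h i x y.
Proof.
move=> Hn Hx Hy; split; [|split; [|split]].
- by move=> k; apply: (Rle_cv_lim _ (cv_const 0) (Hx k)) => n; case: (Hn n) => x0 _.
- by move=> k; apply: (Rle_cv_lim _ (cv_const 0) (Hy k)) => n; case: (Hn n) => _ [y0 _].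
- apply: functional_extensionality => r.
  apply: (UL_sequence _ _ _ (matvec_cv A r Hx)).
  by apply: (Un_cv_ext (fun _ => b r)) (cv_const _) => n; case: (Hn n) => _ [_ [-> _]].
- apply: functional_extensionality => l.
  apply: (UL_sequence _ _ _ (CV_plus _ _ _ _ (matvec_cv (T i) l Hx) (matvec_cv (W i) l Hy))).
  by apply: (Un_cv_ext (fun _ => h i l)) (cv_const _) => n; case: (Hn n) => _ [_ [_ <-]].
Qed.

Lemma scen_feasible_cluster (xs : nat -> 'I_nI -> vec M) (ys : nat -> 'I_nI -> vec N) :
  (forall n, scen_feasible (xs n) (ys n)) ->
  exists phi x y, incr_index phi /\ scen_feasible x y /\
    (forall i m, Un_cv (fun n => xs (phi n) i m) (x i m)) /\
    (forall i l, Un_cv (fun n => ys (phi n) i l) (y i l)).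
Proof.
move=> Hfeas; have [B HB] := choice _ HFbd.
pose u n (k : ('I_nI * 'I_M) + ('I_nI * 'I_N)) :=
  match k with inl (i, m) => xs n i m | inr (i, l) => ys n i l end.
have Hu : forall n k, Rabs (u n k) <= fsum (fun i => Rabs (B i)).
  have B_le : forall i, B i <= fsum (fun i => Rabs (B i)).
    move=> i; apply: Rle_trans (Rle_abs _) (ler_fsum_term (F := fun i => Rabs (B i)) i _).
    by move=> ?; apply: Rabs_pos.
  move=> n [[i m]|[i l]] /=; apply: Rle_trans (B_le i).
  - exact: (HB i _ _ (Hfeas n i)).1.
  - exact: (HB i _ _ (Hfeas n i)).2.
have [phi [lim [Hphi Hcv]]] := bounded_fam_cv_subseq Hu.
exists phi, (fun i m => lim (inl (i, m))), (fun i l => lim (inr (i, l))).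
have Hx : forall i m, Un_cv (fun n => xs (phi n) i m) (lim (inl (i, m))).
  by move=> i m; apply: (Hcv (inl (i, m))).
have Hy : forall i l, Un_cv (fun n => ys (phi n) i l) (lim (inr (i, l))).
  by move=> i l; apply: (Hcv (inr (i, l))).
split=> //; split=> // i.
exact: (in_F_closed (fun n => Hfeas (phi n) i) (Hx i) (Hy i)).
Qed.


Definition coord := (('I_nI * 'I_J) + (('I_nI * 'I_M) + 'I_1))%type.

Definition point (e : 'I_nI -> 'I_J -> R) (d : 'I_nI -> 'I_M -> R) (t : R) : coord -> R :=
  fun k => match k with
           | inl (i, j) => e i j
           | inr (inl (i, m)) => d i m
           | inr (inr _) => t
           end.

Lemma fsum_point (v : coord -> R) e d t :
  fsum (fun k => v k * point e d t k) =
  fsum (fun ij => v (inl ij) * e ij.1 ij.2) + fsum (fun im => v (inr (inl im)) * d im.1 im.2) +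
  v (inr (inr ord0)) * t.
Proof.
rewrite fsum_sum fsum_sum fsum_ord1 Rplus_assoc.
by congr (_ + (_ + _)); apply: eq_fsum => -[i j].
Qed.

Lemma fsum_point_dir (v : coord -> R) da dxb dz dt :
  fsum (fun k => v k * point (fun i j => da i j - dz j) (fun _ m => dxb m) dt k) =
  fsum (fun ij : 'I_nI * 'I_J => v (inl ij) * da ij.1 ij.2) -
  fsum (fun j : 'I_J => fsum (fun i : 'I_nI => v (inl (i, j))) * dz j) +
  fsum (fun m : 'I_M => fsum (fun i : 'I_nI => v (inr (inl (i, m)))) * dxb m) +
  v (inr (inr ord0)) * dt.
Proof.
rewrite fsum_point -(fsum_pair_snd (fun ij => v (inl ij)) dz).
rewrite -(fsum_pair_snd (fun im => v (inr (inl im))) dxb) -fsumB /=.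
by congr (_ + _ + _); apply: eq_fsum => ij; ring.
Qed.

(* Violations of the risk constraint [outcome - z \in A] (as [outcome - z - a], [a] accepted),
   of nonanticipativity [x i = xb], and of [t <= c] for a bound [t] on the objective. *)
Definition residual c x y a xb z t : coord -> R :=
  point (fun i j => scen_outcome x y i j - a i j - z j) (fun i m => x i m - xb m) (t - c).

Definition residual_set c (s : coord -> R) : Prop :=
  exists x y a xb z t, scen_feasible x y /\ accepted a /\ dot w z <= t /\
    s = residual c x y a xb z t.

Lemma residual_set_convex c : convex_set (residual_set c).
Proof.
move=> _ _ s [x1 [y1 [a1 [xb1 [z1 [t1 [F1 [A1 [Z1 ->]]]]]]]]]
  [x2 [y2 [a2 [xb2 [z2 [t2 [F2 [A2 [Z2 ->]]]]]]]]] s01.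
exists (fun i k => s * x1 i k + (1 - s) * x2 i k), (fun i k => s * y1 i k + (1 - s) * y2 i k),
  (fun i j => s * a1 i j + (1 - s) * a2 i j), (fun k => s * xb1 k + (1 - s) * xb2 k),
  (fun j => s * z1 j + (1 - s) * z2 j), (s * t1 + (1 - s) * t2).
split; first by move=> i; apply: in_F_convex.
split; first exact: accepted_convex.
split; first by rewrite dot_comb; nra.
apply: functional_extensionality => -[[i j]|[[i m]|o]];
  rewrite /residual /point /scen_outcome /= ?matvec_comb; ring.
Qed.

Lemma residual_shift c x y a xb z t da dxb dz dt s :
  residual c x y (fun i j => a i j - s * da i j) (fun m => xb m - s * dxb m)
    (fun j => z j + s * dz j) (t + s * dt) =
  (fun k => residual c x y a xb z t k +
            s * point (fun i j => da i j - dz j) (fun _ m => dxb m) dt k).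
Proof.
by apply: functional_extensionality => -[[i j]|[[i m]|o]]; rewrite /residual /point /=; ring.
Qed.

(* Compactness of the scenario sets gives a feasible limit point; the slack [delta n] left
   in the risk constraint is absorbed by monotonicity (A1). *)
Lemma vanishing_residuals c g (xs : nat -> 'I_nI -> vec M) (ys : nat -> 'I_nI -> vec N)
    (as_ : nat -> rvec nI J) (xbs : nat -> vec M) (zs : nat -> vec J) (ts : nat -> R) :
  (forall n, scen_feasible (xs n) (ys n)) -> (forall n, accepted (as_ n)) ->
  (forall n, dot w (zs n) <= ts n) ->
  (forall n, sqnorm (residual c (xs n) (ys n) (as_ n) (xbs n) (zs n) (ts n)) < RinvN n) ->
  (forall z x y, Rm (outcome C Q x y) z -> in_X A b W T h x y -> c + g <= dot w z) ->
  g <= 0.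
Proof.
move=> Hfeas Hacc Hzt Hsmall Hopt.
have res_cv0 : forall k,
    Un_cv (fun n => residual c (xs n) (ys n) (as_ n) (xbs n) (zs n) (ts n) k) 0.
  by move=> k; apply: cv0_of_sq_lt_RinvN => n; apply: Rle_lt_trans (sqnorm_ge_sq _ k) (Hsmall n).
have [phi [x [y [Hphi [Hxy [Hx Hy]]]]]] := scen_feasible_cluster Hfeas.
pose i0 : 'I_nI := Ordinal (leq_trans (isT : (0 < 2)%N) HI).
have x_eq : forall i, x i = x i0.
  have Hxb : forall i m, Un_cv (fun n => xbs (phi n) m) (x i m).
    move=> i m; rewrite -[x i m]Rminus_0_r.
    apply: (Un_cv_ext (fun n => xs (phi n) i m - (xs (phi n) i m - xbs (phi n) m))) => [n|].
      ring.
    exact: CV_minus (Hx i m) (cv_subseq Hphi (res_cv0 (inr (inl (i, m))))).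
  by move=> i; apply: functional_extensionality => m; apply: UL_sequence (Hxb i m) (Hxb i0 m).
have HX : in_X A b W T h (x i0) y.
  have [x0 [_ [Ax _]]] := Hxy i0; split=> //; split; first by move=> i; case: (Hxy i) => _ [].
  by split=> // i; rewrite -(x_eq i); case: (Hxy i) => _ [_ [_ ->]].
pose out := outcome C Q (x i0) y.
have gap_cv0 : forall ij : 'I_nI * 'I_J, Un_cv (fun n =>
    out ij.1 ij.2 - scen_outcome (xs (phi n)) (ys (phi n)) ij.1 ij.2 +
    residual c (xs (phi n)) (ys (phi n)) (as_ (phi n)) (xbs (phi n)) (zs (phi n)) (ts (phi n))
      (inl ij)) 0.
  move=> [i j]; rewrite -[X in Un_cv _ X](Rplus_0_r 0).
  rewrite -[X in Un_cv _ (X + _)](Rminus_diag (out i j)).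
  apply: CV_plus (cv_subseq Hphi (res_cv0 (inl (i, j)))); apply: CV_minus (cv_const _) _.
  rewrite /out /outcome -(x_eq i); apply: CV_plus; apply: matvec_cv; [exact: Hx | exact: Hy].
have [delta [delta_cv0 Hdelta]] := cv0_uniform_bound gap_cv0.
have Hbound : forall n, c + g <= ts (phi n) - c + c + delta n * dot w (fun _ => 1).
  move=> n; have Hacc' : accepted (fun i j => out i j - (zs (phi n) j + delta n * 1)).
    apply: accepted_mono (Hacc (phi n)) => i j.
    by have := Hdelta n (i, j); rewrite /residual /point /=; lra.
  have := Hopt _ _ _ (proj2 (risk_accepted _ _) Hacc') HX.
  by rewrite dot_add_scal; have := Hzt (phi n); lra.
have := Rle_cv_lim Hbound (cv_const (c + g)) (CV_plus _ _ _ _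
  (CV_plus _ _ _ _ (cv_subseq Hphi (res_cv0 (inr (inr ord0)))) (cv_const c))
  (CV_mult _ _ _ _ delta_cv0 (cv_const (dot w (fun _ => 1))))).
lra.
Qed.

Lemma residual_set_away c g : 0 < g ->
  (forall z x y, Rm (outcome C Q x y) z -> in_X A b W T h x y -> c + g <= dot w z) ->
  exists r, 0 < r /\ forall s, residual_set c s -> r <= sqnorm s.
Proof.
move=> g0 Hopt; apply: NNPP => Hfar.
have Hnear : forall n, exists x y a xb z t, scen_feasible x y /\ accepted a /\ dot w z <= t /\
    sqnorm (residual c x y a xb z t) < RinvN n.
  move=> n; apply: NNPP => Hno; apply: Hfar; exists (RinvN n); split; first exact: RinvN_pos.
  move=> _ [x [y [a [xb [z [t [Hxy [Ha [Hzt ->]]]]]]]]].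
  by apply: Rnot_lt_le => lt_s; apply: Hno; exists x, y, a, xb, z, t.
have [xs H1] := choice _ Hnear; have [ys H2] := choice _ H1; have [as_ H3] := choice _ H2.
have [xbs H4] := choice _ H3; have [zs H5] := choice _ H4; have [ts H6] := choice _ H5.
suff : g <= 0 by lra.
apply: (@vanishing_residuals c g xs ys as_ xbs zs ts _ _ _ _ Hopt) => n;
  by case: (H6 n) => [? [? [? ?]]].
Qed.

Definition lagrangian (mu : 'I_nI -> vec J) (lam : rvec nI M) x y (a : rvec nI J) :=
  fsum (fun i => dot w (fun j => mu i j * scen_outcome x y i j) + p i * dot (lam i) (x i)) -
  dot w (Emu mu a).

Section Separator.
Variables (c r : R) (v : coord -> R) (x0 : vec M) (y0 : 'I_nI -> vec N) (a0 : rvec nI J).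
Hypotheses (r0 : 0 < r) (Hsep : forall s, residual_set c s -> r <= fsum (fun k => v k * s k))
  (Hbase : scen_feasible (fun _ => x0) y0) (Ha0 : accepted a0).

Local Notation risk_mult i j := (v (inl (i, j))).
Local Notation nonant_mult i m := (v (inr (inl (i, m)))).
Local Notation obj_mult := (v (inr (inr ord0))).

Lemma base_in_residual_set : residual_set c (residual c (fun _ => x0) y0 a0 x0 (fun _ => 0) 0).
Proof.
exists (fun _ => x0), y0, a0, x0, (fun _ => 0), 0.
by do !split=> //; apply: Req_le; apply: dot_zero.
Qed.

Lemma base_recession da dxb dz dt : (forall i j, 0 <= da i j) -> dot w dz <= dt ->
  0 <= fsum (fun ij : 'I_nI * 'I_J => v (inl ij) * da ij.1 ij.2) -
       fsum (fun j : 'I_J => fsum (fun i : 'I_nI => risk_mult i j) * dz j) +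
       fsum (fun m : 'I_M => fsum (fun i : 'I_nI => nonant_mult i m) * dxb m) + obj_mult * dt.
Proof.
move=> da0 Hdz; rewrite -fsum_point_dir.
apply: (ray_nonneg Hsep (s0 := residual c (fun _ => x0) y0 a0 x0 (fun _ => 0) 0)) => s s_ge0.
rewrite -residual_shift.
exists (fun _ => x0), y0, (fun i j => a0 i j - s * da i j), (fun m => x0 m - s * dxb m),
  (fun j => 0 + s * dz j), (0 + s * dt).
split=> //; split; last split=> //.
- by apply: accepted_mono Ha0 => i j; have := da0 i j; nra.
- by rewrite dot_add_scal dot_zero; nra.
Qed.

Lemma obj_mult_ge0 : 0 <= obj_mult.
Proof.
have := @base_recession (fun _ _ => 0) (fun _ => 0) (fun _ => 0) 1 (fun _ _ => Rle_refl 0).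
by rewrite dot_zero !fsum_mul0 => /(_ Rle_0_1); lra.
Qed.

Lemma risk_mult_ge0 i j : 0 <= risk_mult i j.
Proof.
pose da i' j' := if (i', j') == (i, j) then 1 else 0.
have da0 : forall i' j', 0 <= da i' j' by move=> ? ?; rewrite /da; case: eqP => _; lra.
have := @base_recession da (fun _ => 0) (fun _ => 0) 0.
rewrite dot_zero !fsum_mul0.
rewrite (eq_fsum (G := fun k : 'I_nI * 'I_J => v (inl k) * (if k == (i, j) then 1 else 0)));
  last by case.
by rewrite fsum_delta => /(_ da0 (Rle_refl 0)); lra.
Qed.

Lemma nonant_mult_sum m : fsum (fun i : 'I_nI => nonant_mult i m) = 0.
Proof.
have ray s := @base_recession (fun _ _ => 0) (fun m' => if m' == m then s else 0) (fun _ => 0) 0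
  (fun _ _ => Rle_refl 0).
move: (ray 1) (ray (-1)); rewrite dot_zero !fsum_mul0 !fsum_delta.
by move=> /(_ (Rle_refl 0)) H1 /(_ (Rle_refl 0)) H2; lra.
Qed.

Lemma risk_mult_sum j : fsum (fun i : 'I_nI => risk_mult i j) = obj_mult * w j.
Proof.
have ray s :=
  @base_recession (fun _ _ => 0) (fun _ => 0) (fun j' => if j' == j then s else 0) (w j * s)
  (fun _ _ => Rle_refl 0).
move: (ray 1) (ray (-1)); rewrite /dot !rsum_fsum !fsum_mul0 !fsum_delta.
by move=> /(_ (Rle_refl _)) H1 /(_ (Rle_refl _)) H2; lra.
Qed.

Lemma obj_mult_gt0 : 0 < obj_mult.
Proof.
case: (Rle_lt_or_eq_dec _ _ obj_mult_ge0) => // sg0.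
have V0 : forall i j, risk_mult i j = 0.
  move=> i j; apply: (fsum_eq0_nonneg (F := fun i => risk_mult i j)) => [k|].
    exact: risk_mult_ge0.
  by rewrite risk_mult_sum -sg0 Rmult_0_l.
have := Hsep base_in_residual_set; rewrite fsum_point -sg0 Rmult_0_l Rplus_0_r.
rewrite (eq_fsum (G := fun _ => 0)) => [|[i j] /=]; last by rewrite V0 Rmult_0_l.
rewrite (eq_fsum (G := fun _ => 0)) => [|[i m] /=]; last by rewrite Rminus_diag Rmult_0_r.
by rewrite !fsum0; lra.
Qed.

(* Where [w j = 0] the [j]-th marginal of [mu] is irrelevant; [p] is a valid choice. *)
Definition mult_mu : 'I_nI -> vec J :=
  fun i j => if Req_EM_T (w j) 0 then p i else risk_mult i j / (obj_mult * w j).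

Definition mult_lam : rvec nI M := fun i m => nonant_mult i m / (obj_mult * p i).

Lemma risk_mult_eq i j : obj_mult * (w j * mult_mu i j) = risk_mult i j.
Proof.
rewrite /mult_mu; case: Req_EM_T => [w0|w0] /=; last by field; have := obj_mult_gt0; lra.
rewrite w0 Rmult_0_l Rmult_0_r; symmetry.
apply: (fsum_eq0_nonneg (F := fun i => risk_mult i j)) => [k|]; first exact: risk_mult_ge0.
by rewrite risk_mult_sum w0 Rmult_0_r.
Qed.

Lemma nonant_mult_eq i m : obj_mult * (p i * mult_lam i m) = nonant_mult i m.
Proof. by rewrite /mult_lam; field; have := obj_mult_gt0; have := Hp i; lra. Qed.

Lemma mult_mu_M1 : in_M1 mult_mu.
Proof.
split=> [i j|j]; rewrite /mult_mu; case: Req_EM_T => [w0|w0] /=.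
- exact: Rlt_le (Hp i).
- apply: Rmult_le_pos (risk_mult_ge0 i j) _; left; apply: Rinv_0_lt_compat.
  by apply: Rmult_lt_0_compat obj_mult_gt0 _; case: (Hw0 j) => // /esym.
- exact: Hp1.
- by rewrite rsum_fsum /Rdiv fsumZr risk_mult_sum; field; have := obj_mult_gt0; lra.
Qed.

Lemma mult_lam_mean0 m : rsum (fun i => p i * mult_lam i m) = 0.
Proof.
apply: (Rmult_eq_reg_l obj_mult); last by have := obj_mult_gt0; lra.
rewrite rsum_fsum -fsumZ Rmult_0_r -(nonant_mult_sum m).
by apply: eq_fsum => i; apply: nonant_mult_eq.
Qed.

Lemma obj_mult_lagrangian x y a :
  obj_mult * lagrangian mult_mu mult_lam x y a =
  fsum (fun ij => v (inl ij) * (scen_outcome x y ij.1 ij.2 - a ij.1 ij.2)) +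
  fsum (fun im => v (inr (inl im)) * x im.1 im.2).
Proof.
rewrite /lagrangian fsumD Rmult_minus_distr_l Rmult_plus_distr_l.
have -> : obj_mult * fsum (fun i => dot w (fun j => mult_mu i j * scen_outcome x y i j)) =
    fsum (fun ij => v (inl ij) * scen_outcome x y ij.1 ij.2).
  rewrite -fsumZ fsum_pair; apply: eq_fsum => i; rewrite /dot rsum_fsum -fsumZ.
  by apply: eq_fsum => j /=; rewrite -risk_mult_eq; ring.
have -> : obj_mult * fsum (fun i => p i * dot (mult_lam i) (x i)) =
    fsum (fun im => v (inr (inl im)) * x im.1 im.2).
  rewrite -fsumZ fsum_pair; apply: eq_fsum => i; rewrite /dot rsum_fsum -!fsumZ.
  by apply: eq_fsum => m /=; rewrite -nonant_mult_eq; ring.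
have -> : obj_mult * dot w (Emu mult_mu a) = fsum (fun ij => v (inl ij) * a ij.1 ij.2).
  rewrite fsum_pair fsum_exch /dot rsum_fsum -fsumZ; apply: eq_fsum => j.
  by rewrite /Emu rsum_fsum -!fsumZ; apply: eq_fsum => i /=; rewrite -risk_mult_eq; ring.
rewrite [in RHS](eq_fsum (G := fun ij => v (inl ij) * scen_outcome x y ij.1 ij.2 -
  v (inl ij) * a ij.1 ij.2)) ?fsumB; [ring | by move=> ij; ring].
Qed.

Lemma separator_lagrangian x y a : scen_feasible x y -> accepted a ->
  c < lagrangian mult_mu mult_lam x y a.
Proof.
move=> Hxy Ha.
have : residual_set c (residual c x y a (fun _ => 0) (fun _ => 0) 0).
  by exists x, y, a, (fun _ => 0), (fun _ => 0), 0; do !split=> //; apply: Req_le; apply: dot_zero.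
move=> /Hsep; rewrite fsum_point.
have -> : fsum (fun ij => v (inl ij) * (scen_outcome x y ij.1 ij.2 - a ij.1 ij.2 - 0)) +
    fsum (fun im => v (inr (inl im)) * (x im.1 im.2 - 0)) + obj_mult * (0 - c) =
    obj_mult * lagrangian mult_mu mult_lam x y a - obj_mult * c.
  by rewrite obj_mult_lagrangian; congr (_ + _ + _); try apply: eq_fsum => ?; ring.
move=> H; apply: (Rmult_lt_reg_l obj_mult); [exact: obj_mult_gt0 | lra].
Qed.

End Separator.

Definition dual_value (mu : 'I_nI -> vec J) (lam : rvec nI M) : Rbar :=
  Rbar_minus (Rbar_sum (fun i => f_i p A b C W T h Q i (mu i) (lam i) w)) (beta Rm mu w).

Lemma fsum_dot_Emu (mu : 'I_nI -> vec J) (u : rvec nI J) :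
  fsum (fun i => dot w (fun j => mu i j * u i j)) = dot w (Emu mu u).
Proof.
rewrite (eq_fsum (G := fun i => fsum (fun j => w j * (mu i j * u i j)))) // fsum_exch.
by rewrite /dot rsum_fsum; apply: eq_fsum => j; rewrite /Emu rsum_fsum -fsumZ.
Qed.

Lemma lagrangian_nonanticipative mu lam x y z : in_M1 mu ->
  (forall m, rsum (fun i => p i * lam i m) = 0) ->
  lagrangian mu lam (fun _ => x) y (fun i j => outcome C Q x y i j - z j) = dot w z.
Proof.
move=> [_ mu1] lam0; rewrite /lagrangian fsumD fsum_dot_Emu.
change (scen_outcome (fun _ => x) y) with (outcome C Q x y).
have -> : fsum (fun i => p i * dot (lam i) x) = 0.
  rewrite (eq_fsum (G := fun i => fsum (fun m => p i * lam i m * x m))); last first.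
    by move=> i; rewrite /dot rsum_fsum -fsumZ; apply: eq_fsum => m; ring.
  rewrite fsum_exch (eq_fsum (G := fun _ => 0)) ?fsum0 // => m.
  by rewrite fsumZr -rsum_fsum lam0 Rmult_0_l.
have -> : dot w (Emu mu (fun i j => outcome C Q x y i j - z j)) =
    dot w (Emu mu (outcome C Q x y)) - dot w z.
  rewrite /dot !rsum_fsum -fsumB; apply: eq_fsum => j; rewrite /Emu !rsum_fsum.
  rewrite (eq_fsum (G := fun i => mu i j * outcome C Q x y i j - mu i j * z j)) => [|i]; last ring.
  have mu1j : fsum (fun i => mu i j) = 1 := mu1 j.
  by rewrite fsumB fsumZr mu1j Rmult_1_l Rmult_minus_distr_l.
ring.
Qed.

Lemma f_i_inf mu lam i : f_i p A b C W T h Q i (mu i) (lam i) w =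
  Rbar_inf (Rbar_of (fun v => exists x y, in_F A b W T h i x y /\
    v = dot w (fun j => mu i j * (matvec C x j + matvec (Q i) y j)) + p i * dot (lam i) x)).
Proof.
rewrite /f_i /Rbar_of; congr Rbar_inf.
apply: functional_extensionality => t; apply: propositional_extensionality; split.
- by move=> [x [y [Hxy ->]]]; eexists; split; [exists x, y | reflexivity].
- by move=> [_ [[x [y [Hxy ->]]] ->]]; exists x, y.
Qed.

Lemma beta_sup mu :
  beta Rm mu w = Rbar_sup (Rbar_of (fun v => exists a, accepted a /\ v = dot w (Emu mu a))).
Proof.
rewrite /beta /Rbar_of; congr Rbar_sup.
apply: functional_extensionality => t; apply: propositional_extensionality; split.
- by move=> [a [Ha ->]]; eexists; split; [exists a | reflexivity].
- by move=> [_ [[a [Ha ->]] ->]]; exists a.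
Qed.

Lemma dual_value_le_lagrangian mu lam x y a : scen_feasible x y -> accepted a ->
  Rbar_le (dual_value mu lam) (Fin (lagrangian mu lam x y a)).
Proof.
move=> Hxy Ha; apply: Rbar_minus_le.
- apply: Rbar_sum_le => i; rewrite f_i_inf; apply: (Rbar_inf_glb _).1.
  by eexists; split; [exists (x i), (y i) | reflexivity].
- by rewrite beta_sup; apply: (Rbar_sup_lub _).1; eexists; split; [exists a | reflexivity].
Qed.

Lemma weak_duality mu lam z x y : in_M1 mu -> (forall m, rsum (fun i => p i * lam i m) = 0) ->
  Rm (outcome C Q x y) z -> in_X A b W T h x y -> Rbar_le (dual_value mu lam) (Fin (dot w z)).
Proof.
move=> Hmu lam0 Hz HX; rewrite -(lagrangian_nonanticipative x y z Hmu lam0).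
apply: dual_value_le_lagrangian; first exact: in_X_scen_feasible HX.
exact: (proj1 (risk_accepted _ _) Hz).
Qed.

Lemma lagrangian_le_dual_value mu lam c :
  (forall x y a, scen_feasible x y -> accepted a -> c <= lagrangian mu lam x y a) ->
  Rbar_le (Fin c) (dual_value mu lam).
Proof.
move=> Hc; rewrite /dual_value (functional_extensionality _ _ (f_i_inf mu lam)) beta_sup.
apply: Rbar_le_sum_inf_sub_sup.
- by move=> i; have [x [y Hxy]] := HFne i; eexists; exists x, y.
- by have [a Ha] := accepted_exists; eexists; exists a.
- move=> g bb Hg [a [Ha ->]]; have [x Hx] := choice _ Hg; have [y Hy] := choice _ Hx.
  have -> : fsum g =
      fsum (fun i => dot w (fun j => mu i j * scen_outcome x y i j) + p i * dot (lam i) (x i)).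
    by apply: eq_fsum => i; case: (Hy i) => _ ->.
  exact: Hc x y a (fun i => (Hy i).1) Ha.
Qed.

Lemma exists_multipliers c g : 0 < g ->
  (forall z x y, Rm (outcome C Q x y) z -> in_X A b W T h x y -> c + g <= dot w z) ->
  exists mu lam, in_M1 mu /\ (forall m, rsum (fun i => p i * lam i m) = 0) /\
    forall x y a, scen_feasible x y -> accepted a -> c <= lagrangian mu lam x y a.
Proof.
move=> g0 Hopt; have [r [r0 Haway]] := residual_set_away g0 Hopt.
have [x0 [y0 /in_X_scen_feasible Hbase]] := HXne; have [a0 Ha0] := accepted_exists.
have Sne := ex_intro _ _ (base_in_residual_set c Hbase Ha0).
have [v Hsep] := convex_separation (@residual_set_convex c) Sne Haway.
exists (mult_mu v), (mult_lam v); split; [|split].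
- exact: mult_mu_M1 r0 Hsep Hbase Ha0.
- exact: mult_lam_mean0 r0 Hsep Hbase Ha0.
- by move=> x y a Hxy Ha; exact: Rlt_le (separator_lagrangian r0 Hsep Hbase Ha0 Hxy Ha).
Qed.

End TwoStage.

Theorem theorem5p1 (nI J K M N L : nat) (HI : (2 <= nI)%nat)
  (p : 'I_nI -> R) (Hp : forall i, (0 < p i)%R) (Hp1 : rsum p = 1%R)
  (Rm : set_valued nI J) (HRm : is_mcrm Rm)
  (A : 'I_K -> 'I_M -> R) (b : vec K) (C : 'I_J -> 'I_M -> R)
  (W : 'I_nI -> 'I_L -> 'I_N -> R) (T : 'I_nI -> 'I_L -> 'I_M -> R) (h : rvec nI L)
  (Q : 'I_nI -> 'I_J -> 'I_N -> R)
  (HXne : exists x y, in_X A b W T h x y)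
  (HXbd : exists B : R, forall x y, in_X A b W T h x y ->
            (forall k, (Rabs (x k) <= B)%R) /\ (forall i k, (Rabs (y i k) <= B)%R))
  (HFne : forall i, exists x y, in_F A b W T h i x y)
  (HFbd : forall i, exists B : R, forall x y, in_F A b W T h i x y ->
            (forall k, (Rabs (x k) <= B)%R) /\ (forall k, (Rabs (y k) <= B)%R))
  (w : vec J) (Hw0 : nonnegv w) (Hw1 : exists j, w j <> 0%R) :
  P1 Rm A b C W T h Q w =
  Rbar_sup (fun v => exists (mu : 'I_nI -> vec J) (lam : rvec nI M),
     in_M1 mu /\ (forall k, rsum (fun i => (p i * lam i k)%R) = 0%R) /\
     v = Rbar_minus (Rbar_sum (fun i => f_i p A b C W T h Q i (mu i) (lam i) w))
                    (beta Rm mu w)).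
Proof.
rewrite /P1; apply: Rbar_le_antisym.
- apply: (Rbar_glb_le (Rbar_inf_glb _)) => c g g0 Hlow.
  have Hopt : forall z x y, Rm (outcome C Q x y) z -> in_X A b W T h x y -> c + g <= dot w z.
    by move=> z x y Hz HX; apply: (Hlow (Fin (dot w z))); exists z, x, y.
  have [mu [lam [Hmu [lam0 Hlagr]]]] := exists_multipliers HRm HI Hp Hp1 Hw0 HXne HFbd g0 Hopt.
  apply: Rbar_le_trans (lagrangian_le_dual_value HRm HFne Hlagr) _.
  by apply: (Rbar_sup_lub _).1; exists mu, lam.
- apply: (Rbar_sup_lub _).2 => _ [mu [lam [Hmu [lam0 ->]]]].
  apply: (Rbar_inf_glb _).2 => _ [z [x [y [Hz [HX ->]]]]].
  exact (weak_duality w HRm Hmu lam0 Hz HX).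
Qed.
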